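(* If $\mathrm{char}(\Bbbk)=3$, then $H=\{h_1,h_2,h_3\}$ with $h_1=yz-x^3-y^6z^2+xy^4z^3$, $h_2=z^3+xy^3+x^2yz-y^5z^4$, $h_3=y^4+xy^2z+x^2z^2-y^4z^5$ is a standard basis of $P$ with respect to the negative degree reverse lexicographic order $>_{\rm ds}$.
   Context: $\Bbbk$ is a field, $\rho:\Bbbk[[x,y,z]]\to\Bbbk[[t]]$ is the $\Bbbk$-algebra morphism with $\rho(x)=t^6+t^{31}$, $\rho(y)=t^8$, $\rho(z)=t^{10}$, and $P=\ker\rho$. The order $>_{\rm ds}$ on monomials $x^\alpha=x^{\alpha_1}y^{\alpha_2}z^{\alpha_3}$: $x^\alpha>_{\rm ds}x^\beta$ iff $|\alpha|<|\beta|$, or $|\alpha|=|\beta|$ and there is $i\in\{1,2\}$ with $\alpha_3=\beta_3,\ldots,\alpha_{i+1}=\beta_{i+1}$ and $\alpha_i<\beta_i$ (so $1>x>y>z>x^2>xy>y^2>xz>yz>z^2>\cdots$). For $0\ne f\in\Bbbk[[x,y,z]]$, the leading monomial $\mathrm{LM}(f)$ is the $>_{\rm ds}$-largest monomial in the support of $f$. A finite set $G\subseteq I$ is a standard basis of an ideal $I\subseteq\Bbbk[[x,y,z]]$ if the ideal generated by $\{\mathrm{LM}(g):g\in G,g\neq0\}$ equals the ideal generated by $\{\mathrm{LM}(f): f\in I, f\ne0\}$. *)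

From Stdlib Require Import List.
From mathcomp Require Import all_boot all_order all_algebra.
Set Implicit Arguments. Unset Strict Implicit. Unset Printing Implicit Defensive.
Import GRing.Theory.
Local Open Scope ring_scope.

(* exponent vectors (a1,a2,a3) of monomials x^a1 y^a2 z^a3 *)
Definition mon : Type := (nat * nat * nat)%type.
Definition e1 (m : mon) : nat := m.1.1.
Definition e2 (m : mon) : nat := m.1.2.
Definition e3 (m : mon) : nat := m.2.
Definition mdeg (m : mon) : nat := (e1 m + e2 m + e3 m)%N.

Section PS.
Variable K : fieldType.

(* K[[x,y,z]] : a power series is its coefficient function *)
Definition ps := mon -> K.

Definition ps0 : ps := fun _ => 0.

Definition psmul (f g : ps) : ps := fun m =>
  \sum_(i < (e1 m).+1) \sum_(j < (e2 m).+1) \sum_(l < (e3 m).+1)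
     f (i : nat, j : nat, l : nat) * g ((e1 m - i)%N, (e2 m - j)%N, (e3 m - l)%N).

Definition psmono (m : mon) : ps := fun b => if b == m then 1 else 0.

Definition ps_of_terms (s : seq (K * mon)) : ps :=
  fun b => \sum_(p <- s) (if p.2 == b then p.1 else 0).

Definition in_ideal (S : ps -> Prop) (f : ps) : Prop :=
  exists l : seq (ps * ps), (forall p, In p l -> S p.2) /\
    forall b, f b = \sum_(p <- l) psmul p.1 p.2 b.

Definition us := nat -> K.
Definition umul (f g : us) : us := fun n => \sum_(i < n.+1) f i * g (n - i)%N.
Definition utpow (k : nat) : us := fun n => (n == k)%:R.
Definition upow (f : us) (k : nat) : us := iter k (umul f) (utpow 0).

Definition rho_x : us := fun n => (n == 6)%:R + (n == 31)%:R.

(* The continuous K-algebra morphism rho : K[[x,y,z]] -> K[[t]],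
   x |-> t^6+t^31, y |-> t^8, z |-> t^10.  Since rho(x^a y^b z^c) has order
   6a+8b+10c, only exponents a,b,c <= n contribute to the coefficient of t^n. *)
Definition rho (f : ps) : us := fun n =>
  \sum_(a < n.+1) \sum_(b < n.+1) \sum_(c < n.+1)
     f (a : nat, b : nat, c : nat) * umul (upow rho_x a) (utpow (8 * b + 10 * c)) n.

Definition P_ker (f : ps) : Prop := forall n, rho f n = 0.

Definition ds_gt (a b : mon) : bool :=
  (mdeg a < mdeg b)%N ||
  ((mdeg a == mdeg b) &&
    [|| (e3 a < e3 b)%N,
        (e3 a == e3 b) && (e2 a < e2 b)%N
      | [&& e3 a == e3 b, e2 a == e2 b & (e1 a < e1 b)%N]]).

Definition isLM (f : ps) (m : mon) : Prop :=
  f m != 0 /\ forall b, f b != 0 -> b <> m -> ds_gt m b.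

Definition LMset (S : ps -> Prop) (g : ps) : Prop :=
  exists f m, S f /\ isLM f m /\ g = psmono m.

Definition standard_basis (G : seq ps) (I : ps -> Prop) : Prop :=
  (forall g, In g G -> I g) /\
  forall f, in_ideal (LMset (fun g => In g G)) f <-> in_ideal (LMset I) f.

Definition h1 : ps := ps_of_terms
  [:: (1, (0,1,1)%N); (-1, (3,0,0)%N); (-1, (0,6,2)%N); (1, (1,4,3)%N)].
Definition h2 : ps := ps_of_terms
  [:: (1, (0,0,3)%N); (1, (1,3,0)%N); (1, (2,1,1)%N); (-1, (0,5,4)%N)].
Definition h3 : ps := ps_of_terms
  [:: (1, (0,4,0)%N); (1, (1,2,1)%N); (1, (2,0,2)%N); (-1, (0,4,5)%N)].

End PS.

(* The weight of x^a y^b z^c is 6a + 8b + 10c, and rho sends this monomial to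
   t^weight (1 + t^25)^a.  Hence rho(h1) = -3 (t^43 + t^68), rho(h2) = 3 (t^30 + t^55)
   and rho(h3) = 3 (t^32 + t^57) vanish in characteristic 3, while the leading
   monomials of h1, h2, h3 are yz, z^3, y^4.
   Conversely let f in P have leading monomial x^a y^b z^c of weight w, with b <= 3,
   c <= 2 and bc = 0.  The other monomials of f have degree at least a + b + c, hence
   weight greater than w - 25; as weights are even and w + 25 is odd, the coefficients
   of t^w and t^(w+25) in rho(f) only see the monomials m of weight exactly w, and give
   sum f_m = 0 and sum a_m f_m = 0 over them, a_m being the exponent of x in m.  There
   are at most three such monomials below x^a y^b z^c, and these two equations force
   its coefficient to vanish (for x^a y^3 and x^a z^2 because 3 = 0 and 2 <> 0). *)

From mathcomp Require Import all_boot all_order all_algebra zify ring.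
Set Implicit Arguments. Unset Strict Implicit. Unset Printing Implicit Defensive.
Import GRing.Theory.
Local Open Scope ring_scope.

Lemma eq_big_supp (T : eqType) (R : nmodType) (s1 s2 : seq T) (F : T -> R) :
  uniq s1 -> uniq s2 -> (forall x, F x != 0 -> (x \in s1) = (x \in s2)) ->
  \sum_(x <- s1) F x = \sum_(x <- s2) F x.
Proof.
move=> uniq1 uniq2 supp12.
have suppE s : \sum_(x <- s) F x = \sum_(x <- [seq x <- s | F x != 0]) F x.
  by rewrite big_filter (@big_rmcond _ _ +%R _ s (fun x => F x != 0) F) // => x /negPn/eqP.
rewrite [LHS]suppE [RHS]suppE; apply/perm_big/uniq_perm; rewrite ?filter_uniq // => x.
by rewrite !mem_filter; case: (F x =P 0) => //= /eqP /supp12.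
Qed.

Definition mle (m b : mon) : bool :=
  [&& (e1 m <= e1 b)%N, (e2 m <= e2 b)%N & (e3 m <= e3 b)%N].

Definition box (b : mon) : seq mon :=
  [seq (ij, l) | ij <- [seq (i, j) | i <- iota 0 (e1 b).+1, j <- iota 0 (e2 b).+1],
                 l <- iota 0 (e3 b).+1].

Lemma box_uniq b : uniq (box b).
Proof.
by rewrite allpairs_uniq ?allpairs_uniq ?iota_uniq // => -[? ?] [? ?] _ _ [-> ->].
Qed.

Lemma mem_box m b : (m \in box b) = mle m b.
Proof.
apply/idP/idP.
  case/allpairsP => -[[i j] l] [/allpairsP[[i' j'] [i_in j_in [-> ->]]] l_in ->].
  by rewrite !mem_iota /mle /e1 /e2 /e3 /= in i_in j_in l_in *; lia.
case: m => [[i j] l] /and3P[hi hj hl].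
apply: allpairs_f; last by rewrite mem_iota ltnS.
by apply: allpairs_f; rewrite mem_iota ltnS.
Qed.

Lemma big_box (R : nmodType) (F : mon -> R) b :
  \sum_(i < (e1 b).+1) \sum_(j < (e2 b).+1) \sum_(l < (e3 b).+1) F (i : nat, j : nat, l : nat)
  = \sum_(m <- box b) F m.
Proof.
have iotaE n (G : nat -> R) : \sum_(i <- iota 0 n) G i = \sum_(i < n) G i.
  by rewrite -(big_mkord xpredT) /index_iota subn0.
rewrite !big_allpairs_dep iotaE; apply: eq_bigr => i _.
by rewrite iotaE; apply: eq_bigr => j _; rewrite iotaE.
Qed.

Section Rho.
Variable K : fieldType.

Definition weight (m : mon) : nat := 6 * e1 m + 8 * e2 m + 10 * e3 m.

Definition rho_mono (m : mon) : {poly K} :=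
  ('X^6 + 'X^31) ^+ e1 m * 'X^(8 * e2 m + 10 * e3 m).

Lemma upow_rho_x a i : upow (rho_x K) a i = (('X^6 + 'X^31) ^+ a)`_i.
Proof.
elim: a i => [|a IH] i; first by rewrite expr0 coef1 /upow /utpow /= eq_sym.
rewrite exprS coefM /upow iterS /umul -/(upow _ a).
by apply: eq_bigr => j _; rewrite IH coefD !coefXn.
Qed.

Lemma rho_mono_sum m :
  rho_mono m = \sum_(i < (e1 m).+1) 'X^(weight m + 25 * i) *+ 'C(e1 m, i).
Proof.
rewrite /rho_mono exprDn big_distrl /=; apply: eq_bigr => i _.
rewrite mulrnAl -!exprM -!exprD; congr ('X^_ *+ _).
have := ltn_ord i; rewrite /weight; lia.
Qed.

Lemma coef_rho_mono m n :
  (rho_mono m)`_n = \sum_(i < (e1 m).+1) (n == weight m + 25 * i)%N%:R *+ 'C(e1 m, i).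
Proof. by rewrite rho_mono_sum coef_sum; apply: eq_bigr => i _; rewrite coefMn coefXn. Qed.

Lemma coef_rho_mono_lt m n : (n < weight m)%N -> (rho_mono m)`_n = 0.
Proof.
move=> lt_n_wt; rewrite coef_rho_mono big1 // => i _.
by rewrite (_ : (n == _) = false) ?mul0rn //; apply/eqP; lia.
Qed.

Lemma coef_rho_mono_window m n : (n < weight m + 50)%N ->
  (rho_mono m)`_n = (n == weight m)%N%:R + (n == weight m + 25)%N%:R *+ e1 m.
Proof.
move=> lt_n_wt; rewrite coef_rho_mono big_ord_recl bin0 muln0 addn0.
congr (_ + _); case: (e1 m) => [|a]; first by rewrite big_ord0.
rewrite big_ord_recl bin1 big1 ?addr0 // => i _.
by rewrite !lift0 (_ : (n == _) = false) ?mul0rn //; apply/eqP; lia.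
Qed.

Lemma rhoE f n : rho f n = \sum_(m <- box (n, n, n)) f m * (rho_mono m)`_n.
Proof.
rewrite -big_box; apply: eq_bigr => a _; apply: eq_bigr => b _; apply: eq_bigr => c _.
rewrite /rho_mono coefM; congr (_ * _); apply: eq_bigr => i _.
by rewrite upow_rho_x coefXn.
Qed.

Lemma coef_rho_mono_box m n : (rho_mono m)`_n != 0 -> m \in box (n, n, n).
Proof.
move=> nz; rewrite mem_box; have : (weight m <= n)%N.
  by rewrite leqNgt; apply: contra nz => /coef_rho_mono_lt ->.
by case: m nz => [[a b] c] _; rewrite /mle /weight /e1 /e2 /e3 /=; lia.
Qed.

Lemma rho_supp f n (S : seq mon) : uniq S ->
    (forall m, m \notin S -> f m * (rho_mono m)`_n = 0) ->
  rho f n = \sum_(m <- S) f m * (rho_mono m)`_n.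
Proof.
move=> uniqS offS; rewrite rhoE; apply: eq_big_supp => // [|m nz]; first exact: box_uniq.
have mS : m \in S by apply: contraLR nz => /offS ->; rewrite negbK.
by rewrite mS coef_rho_mono_box //; apply: contraNneq nz => ->; rewrite mulr0.
Qed.

Lemma rho_ps_of_terms (s : seq (K * mon)) n :
  rho (ps_of_terms s) n = (\sum_(p <- s) p.1 *: rho_mono p.2)`_n.
Proof.
rewrite rhoE coef_sum.
under eq_bigr do rewrite /ps_of_terms big_distrl /=.
rewrite exchange_big; apply: eq_bigr => p _.
rewrite coefZ (eq_big_supp (s2 := [:: p.2])) ?box_uniq ?big_seq1 ?eqxx // => m.
case: (p.2 =P m) => [<- nz|_]; last by rewrite mul0r eqxx.
by rewrite mem_seq1 eqxx coef_rho_mono_box //; apply: contraNneq nz => ->; rewrite mulr0.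
Qed.

Lemma ps_of_terms_in_ker p (s : seq (K * mon)) (q : {poly K}) : p \in [pchar K] ->
  \sum_(t <- s) t.1 *: rho_mono t.2 = q *+ p -> P_ker (ps_of_terms s).
Proof. by move=> charp rho_s n; rewrite rho_ps_of_terms rho_s coefMn (mulrn_pchar charp). Qed.

End Rho.

Section LeadingMonomial.
Variable K : fieldType.

Lemma ds_gt_mdeg m m' : ds_gt m m' -> (mdeg m <= mdeg m')%N.
Proof. by rewrite /ds_gt; lia. Qed.

Lemma isLM_supp (f : ps K) m0 m : isLM f m0 -> f m != 0 -> (m == m0) || ds_gt m0 m.
Proof.
move=> [_ LMf] nz; have [//|neq] := eqVneq m m0.
by rewrite LMf //; apply/eqP.
Qed.

Lemma isLM_ps_of_terms (c : K) m (s : seq (K * mon)) :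
  c != 0 -> m \notin map snd s -> all (ds_gt m) (map snd s) ->
  isLM (ps_of_terms ((c, m) :: s)) m.
Proof.
move=> c_nz m_notin s_lt.
have off_s b : b \notin map snd s -> ps_of_terms s b = 0.
  move=> b_notin; rewrite /ps_of_terms big1_seq // => t /andP[_ ts].
  by case: eqP => // tb; rewrite -tb map_f in b_notin.
have coefE b : ps_of_terms ((c, m) :: s) b = (if m == b then c else 0) + ps_of_terms s b.
  by rewrite /ps_of_terms big_cons.
split => [|b]; first by rewrite coefE eqxx off_s // addr0.
rewrite coefE; case: (boolP (b \in map snd s)) => [bs _ _|/off_s ->].
  exact: (allP s_lt).
by rewrite addr0; case: (m =P b) => [-> _ []|_]; rewrite ?eqxx.
Qed.

Lemma ker_weight_class (f : ps K) m0 (S : seq mon) :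
  P_ker f -> isLM f m0 -> uniq S -> (weight m0 < 6 * mdeg m0 + 25)%N ->
  all (fun m => weight m == weight m0) S ->
  (forall m, m \notin S -> (m == m0) || ds_gt m0 m -> weight m != weight m0) ->
  \sum_(m <- S) f m = 0 /\ \sum_(m <- S) f m *+ e1 m = 0.
Proof.
move=> fP LMf uniqS wt_m0 S_wt off_S.
have wt_supp m : f m != 0 -> (6 * mdeg m0 <= weight m)%N.
  move=> /(isLM_supp LMf) /orP[/eqP ->|/ds_gt_mdeg]; rewrite /weight /mdeg; lia.
pose w0 := weight m0.
have wt_even m : weight m = 2 * (3 * e1 m + 4 * e2 m + 5 * e3 m) :> nat.
  by rewrite /weight; lia.
have rho_f k : (k == w0) || (k == w0 + 25) ->
    rho f k = \sum_(m <- S) f m * ((k == w0)%:R + (k == w0 + 25)%:R *+ e1 m).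
  move=> k_w0; rewrite (rho_supp uniqS) => [|m m_notin]; last first.
    have [->|nz] := eqVneq (f m) 0; first by rewrite mul0r.
    move: (off_S m m_notin (isLM_supp LMf nz)) (wt_supp m nz) => neq wt_m.
    move: (wt_even m) (wt_even m0); rewrite /w0 in k_w0 => even_m even_m0.
    rewrite coef_rho_mono_window; last by lia.
    rewrite (_ : (k == weight m) = false); last by apply/eqP; lia.
    rewrite (_ : (k == weight m + 25) = false); last by apply/eqP; lia.
    by rewrite mul0rn addr0 mulr0.
  apply: eq_big_seq => m mS; rewrite coef_rho_mono_window (eqP (allP S_wt m mS)) //.
  by rewrite /w0; lia.
have w0_neq : (w0 == w0 + 25)%N = false by apply/eqP; lia.
split.
  transitivity (rho f w0); last exact: fP.
  by rewrite rho_f ?eqxx // w0_neq; apply: eq_bigr => m _; rewrite mul0rn addr0 mulr1.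
transitivity (rho f (w0 + 25)); last exact: fP.
by rewrite rho_f ?eqxx ?orbT // eq_sym w0_neq; apply: eq_bigr => m _; rewrite add0r mulr_natr.
Qed.

End LeadingMonomial.

Lemma h1_LM (K : fieldType) : isLM (h1 K) (0, 1, 1)%N.
Proof. exact: isLM_ps_of_terms (oner_neq0 K) _ _. Qed.

Lemma h2_LM (K : fieldType) : isLM (h2 K) (0, 0, 3)%N.
Proof. exact: isLM_ps_of_terms (oner_neq0 K) _ _. Qed.

Lemma h3_LM (K : fieldType) : isLM (h3 K) (0, 4, 0)%N.
Proof. exact: isLM_ps_of_terms (oner_neq0 K) _ _. Qed.

Ltac weight_class_side :=
  try move=> [[? ?] ?]; rewrite /= ?inE ?xpair_eqE /ds_gt /weight /mdeg /e1 /e2 /e3 /=; lia.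

Section CharacteristicThree.
Variable K : fieldType.
Hypothesis char3 : 3%N \in [pchar K].

Lemma two_neq0 : 2%:R != 0 :> K.
Proof.
rewrite (_ : 2%:R = -1) ?oppr_eq0 ?oner_eq0 //.
by apply/eqP; rewrite -subr_eq0 opprK natr1 (pcharf0 char3).
Qed.

Lemma eq0_of_weighted_sums (x y : K) u d :
  x + y = 0 -> x *+ u + y *+ (d + u) = 0 -> d%:R != 0 :> K -> x = 0.
Proof.
move=> sum0 + d_nz; rewrite addnC mulrnDr addrA -mulrnDl sum0 mul0rn add0r -mulr_natr.
by move/eqP; rewrite mulf_eq0 (negPf d_nz) orbF => /eqP y0; move: sum0; rewrite y0 addr0.
Qed.

Lemma ker_LM_divisible (f : ps K) a b c : P_ker f -> isLM f (a, b, c) ->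
  [|| (0 < b) && (0 < c), 3 <= c | 4 <= b]%N.
Proof.
move=> fP LMf; have f_nz := LMf.1; apply/contraT => not_div.
have class S := ker_weight_class (S := S) fP LMf.
case: c not_div LMf f_nz class => [|[|[|c]]]; case: b => [|[|[|[|b]]]] //= _ LMf f_nz class.
- case: (class [:: (a, 0, 0)]%N); [weight_class_side.. |].
  by rewrite big_seq1 => f0; rewrite f0 eqxx in f_nz.
- case: (class [:: (a, 1, 0)]%N); [weight_class_side.. |].
  by rewrite big_seq1 => f0; rewrite f0 eqxx in f_nz.
- case: (class [:: (a, 2, 0); (a.+1, 0, 1)]%N); [weight_class_side.. |].
  rewrite !big_cons !big_nil !addr0 /e1 /= => s0 ws0.
  by rewrite (eq0_of_weighted_sums (d := 1) s0 ws0) ?oner_eq0 ?eqxx in f_nz.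
- case: (class [:: (a, 3, 0); (a.+1, 1, 1); (a.+4, 0, 0)]%N); [weight_class_side.. |].
  rewrite !big_cons !big_nil !addr0 /e1 /= (_ : a.+4 = 3 + a.+1)%N //.
  rewrite mulrnDr (mulrn_pchar char3) add0r -mulrnDl => s0 ws0.
  by rewrite (eq0_of_weighted_sums (d := 1) s0 ws0) ?oner_eq0 ?eqxx in f_nz.
- case: (class [:: (a, 0, 1)]%N); [weight_class_side.. |].
  by rewrite big_seq1 => f0; rewrite f0 eqxx in f_nz.
- case: (class [:: (a, 0, 2); (a.+2, 1, 0)]%N); [weight_class_side.. |].
  rewrite !big_cons !big_nil !addr0 /e1 /= => s0 ws0.
  by rewrite (eq0_of_weighted_sums (d := 2) s0 ws0 two_neq0) eqxx in f_nz.
Qed.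

Lemma h1_in_ker : P_ker (h1 K).
Proof.
apply: (ps_of_terms_in_ker (q := - ('X^43 + 'X^68)) char3).
by rewrite !big_cons big_nil /rho_mono /e1 /e2 /e3 /= !scale1r !scaleN1r; ring.
Qed.

Lemma h2_in_ker : P_ker (h2 K).
Proof.
apply: (ps_of_terms_in_ker (q := 'X^30 + 'X^55) char3).
by rewrite !big_cons big_nil /rho_mono /e1 /e2 /e3 /= !scale1r !scaleN1r; ring.
Qed.

Lemma h3_in_ker : P_ker (h3 K).
Proof.
apply: (ps_of_terms_in_ker (q := 'X^32 + 'X^57) char3).
by rewrite !big_cons big_nil /rho_mono /e1 /e2 /e3 /= !scale1r !scaleN1r; ring.
Qed.

End CharacteristicThree.

Section Ideals.
Variable K : fieldType.

Lemma psmulE (f g : ps K) b :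
  psmul f g b = \sum_(m <- box b) f m * g (e1 b - e1 m, e2 b - e2 m, e3 b - e3 m)%N.
Proof. by rewrite -big_box. Qed.

Lemma psmul_psmono (g : ps K) m b : psmul g (psmono K m) b =
  if mle m b then g (e1 b - e1 m, e2 b - e2 m, e3 b - e3 m)%N else 0.
Proof.
have [le_mb|lt_mb] := boolP (mle m b).
  rewrite psmulE (eq_big_supp (s2 := [:: (e1 b - e1 m, e2 b - e2 m, e3 b - e3 m)%N]));
    rewrite ?box_uniq ?big_seq1 //; last first.
    move=> x; rewrite mem_box inE /psmono; case: ifP => [/eqP eq_m _|_]; last by rewrite mulr0 eqxx.
    move: le_mb eq_m; case: m b x => [[m1 m2] m3] [[b1 b2] b3] [[x1 x2] x3].
    by rewrite /mle /e1 /e2 /e3 /= !xpair_eqE => le_mb [<- <- <-]; lia.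
  rewrite /psmono (_ : _ == m) ?mulr1 //; move: le_mb.
  by case: m b => [[m1 m2] m3] [[b1 b2] b3]; rewrite /mle /e1 /e2 /e3 /= !xpair_eqE; lia.
rewrite psmulE big1_seq // => x /andP[_]; rewrite mem_box /psmono.
case: ifP => [/eqP|_]; last by rewrite mulr0.
move: lt_mb; case: m b x => [[m1 m2] m3] [[b1 b2] b3] [[x1 x2] x3].
by rewrite /mle /e1 /e2 /e3 /= => lt_mb [? ? ?] le_xb; exfalso; lia.
Qed.

Lemma psmul_psmono_split (p : ps K) m0 m : mle m0 m -> forall b,
  psmul p (psmono K m) b =
  psmul (psmul p (psmono K (e1 m - e1 m0, e2 m - e2 m0, e3 m - e3 m0)%N)) (psmono K m0) b.
Proof.
move=> le_m0m b; rewrite !psmul_psmono; move: le_m0m.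
case: m0 m b => [[a1 a2] a3] [[m1 m2] m3] [[b1 b2] b3]; rewrite /mle /e1 /e2 /e3 /= => le_m0m.
case: ifP => le_mb; case: ifP => le_m0b //; rewrite ?psmul_psmono /mle /e1 /e2 /e3 /=; try lia.
  by rewrite ifT; [congr (p (_, _, _)); lia | lia].
by rewrite ifF //; lia.
Qed.

Lemma in_ideal_mono (S T : ps K -> Prop) f :
  (forall g, S g -> T g) -> in_ideal S f -> in_ideal T f.
Proof. by move=> ST [l [lS fE]]; exists l; split => // t /lS /ST. Qed.

Lemma in_ideal_of_multiples (S T : ps K -> Prop) f :
  (forall g p, S g -> exists q g', T g' /\ forall b, psmul p g b = psmul q g' b) ->
  in_ideal S f -> in_ideal T f.
Proof.
move=> ST [l [lS fE]].
suff [l' [l'T lE]] : exists l' : seq (ps K * ps K), (forall t, List.In t l' -> T t.2) /\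
    forall b, \sum_(t <- l) psmul t.1 t.2 b = \sum_(t <- l') psmul t.1 t.2 b.
  by exists l'; split => // b; rewrite fE lE.
elim: l lS {fE} => [|[p g] l IH] lS; first by exists [::].
have [q [g' [g'T gE]]] := ST g p (lS _ (or_introl erefl)).
have [l' [l'T lE]] := IH (fun t lt => lS t (or_intror lt)).
exists ((q, g') :: l'); split; first by move=> t /= [<-|/l'T].
by move=> b; rewrite !big_cons /= gE lE.
Qed.

End Ideals.

Theorem mainTheorem12 (K : fieldType) (char3 : 3%N \in [pchar K]%R) :
  standard_basis [:: h1 K; h2 K; h3 K] (@P_ker K).
Proof.
set G := [:: h1 K; h2 K; h3 K].
have G_ker g : List.In g G -> P_ker g.
  by move=> [<-|[<-|[<-|[]]]]; [exact: h1_in_ker | exact: h2_in_ker | exact: h3_in_ker].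
split => // f; split.
  by apply: in_ideal_mono => _ [g [m [/G_ker g_ker [LMg ->]]]]; exists g, m.
apply: in_ideal_of_multiples => _ p [g [[[a b] c] [g_ker [LMg ->]]]].
have divides g0 m0 : List.In g0 G -> isLM g0 m0 -> mle m0 (a, b, c) ->
    exists q g', LMset (fun g => List.In g G) g' /\
      forall e, psmul p (psmono K (a, b, c)) e = psmul q g' e.
  move=> g0G LMg0 le_m0; exists (psmul p (psmono K (a - e1 m0, b - e2 m0, c - e3 m0)%N)).
  by exists (psmono K m0); split; [exists g0, m0 | exact: psmul_psmono_split].
case/or3P: (ker_LM_divisible char3 g_ker LMg) => [/andP[b_pos c_pos]|c_ge|b_ge].
- by apply: (divides _ _ _ (h1_LM K)); [left | rewrite /mle /e1 /e2 /e3 /=; lia].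
- by apply: (divides _ _ _ (h2_LM K)); [right; left | rewrite /mle /e1 /e2 /e3 /=; lia].
- by apply: (divides _ _ _ (h3_LM K)); [right; right; left | rewrite /mle /e1 /e2 /e3 /=; lia].
Qed.
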